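(* Let $(X,(\cdot,\cdot|\cdot))$ be a 2-inner product space over $\mathbb{K}\in\{\mathbb{R},\mathbb{C}\}$, let $n$ be a positive integer, let $x,y_1,\dots,y_n,z\in X$, and let $p>1$, $q$ with $\frac1p+\frac1q=1$. Then \[ \sum_{i=1}^{n}\left|(x,y_i|z)\right|^2\le \|x|z\|\Big(\sum_{i=1}^n\left|(x,y_i|z)\right|^{2p}\Big)^{\frac{1}{2p}}\left\{\Big(\sum_{i=1}^n\|y_i|z\|^{2q}\Big)^{\frac1q}+(n-1)^{\frac1p}\Big(\sum_{1\le i\ne j\le n}\left|(y_i,y_j|z)\right|^{q}\Big)^{\frac1q}\right\}^{1/2}. \]
   Context: A 2-inner product on a linear space $X$ of dimension greater than $1$ over $\mathbb{K}$ ($\mathbb{K}=\mathbb{R}$ or $\mathbb{C}$) is a function $(\cdot,\cdot|\cdot):X\times X\times X\to\mathbb{K}$ such that for all $x,x',y,z\in X$ and $\alpha\in\mathbb{K}$: (i) $(x,x|z)\ge 0$, and $(x,x|z)=0$ iff $x$ and $z$ are linearly dependent; (ii) $(x,x|z)=(z,z|x)$; (iii) $(y,x|z)=\overline{(x,y|z)}$; (iv) $(\alpha x,y|z)=\alpha(x,y|z)$; (v) $(x+x',y|z)=(x,y|z)+(x',y|z)$. The associated 2-norm is $\|x|z\|=\sqrt{(x,x|z)}$. The sum $\sum_{1\le i\ne j\le n}$ runs over all ordered pairs $(i,j)$ with $i\ne j$. *)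

From HB Require Import structures.
From mathcomp Require Import all_boot all_order all_algebra.
From mathcomp Require Import all_classical all_reals.
From mathcomp Require Import exp.
From mathcomp Require Import complex.
Set Implicit Arguments. Unset Strict Implicit. Unset Printing Implicit Defensive.
Import Order.TTheory GRing.Theory Num.Theory.
Local Open Scope ring_scope.

Definition lin_dep (K : numDomainType) (X : lmodType K) (x z : X) : Prop :=
  exists a b : K, (a != 0 \/ b != 0) /\ a *: x + b *: z = 0.

(* A 2-inner product on a linear space X over K (of dimension > 1),
   where conjK is the conjugation of K (identity for K = R). *)
Definition is_2inner_product (K : numDomainType) (conjK : K -> K)
    (X : lmodType K) (ip : X -> X -> X -> K) : Prop :=
  (exists u v : X, ~ lin_dep u v) /\
  (forall x z, 0 <= ip x x z) /\
  (forall x z, ip x x z = 0 <-> lin_dep x z) /\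
  (forall x z, ip x x z = ip z z x) /\
  (forall x y z, ip y x z = conjK (ip x y z)) /\
  (forall (a : K) x y z, ip (a *: x) y z = a * ip x y z) /\
  (forall x x' y z, ip (x + x') y z = ip x y z + ip x' y z).

(* The inequality of the theorem, for a scalar field K with modulus
   absK : K -> R (valued in the reals R). The 2-norm is
   ||x|z|| = sqrt((x,x|z)), computed as sqrt |(x,x|z)| since (x,x|z) >= 0. *)
Definition ineq_2ip (R : realType) (K : numDomainType) (absK : K -> R)
    (X : lmodType K) (ip : X -> X -> X -> K)
    (n : nat) (x : X) (y : 'I_n -> X) (z : X) (p q : R) : Prop :=
  let norm2 (u w : X) : R := Num.sqrt (absK (ip u u w)) in
  \sum_(i < n) absK (ip x (y i) z) ^+ 2 <=
    norm2 x z
    * (\sum_(i < n) absK (ip x (y i) z) `^ (2 * p)) `^ (2 * p)^-1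
    * ((\sum_(i < n) norm2 (y i) z `^ (2 * q)) `^ q^-1
       + (n.-1)%:R `^ p^-1
         * (\sum_(i < n) \sum_(j < n | j != i) absK (ip (y i) (y j) z) `^ q)
             `^ q^-1) `^ (2^-1).

From HB Require Import structures.
From mathcomp Require Import all_boot all_order all_algebra.
From mathcomp Require Import all_classical all_reals.
From mathcomp Require Import exp.
From mathcomp Require Import complex.
From mathcomp Require Import ring lra.
Set Implicit Arguments. Unset Strict Implicit. Unset Printing Implicit Defensive.
Import Order.TTheory GRing.Theory Num.Theory.
Local Open Scope ring_scope.

(* Put u = sum_i (x,y_i|z) y_i, so that (x,u|z) = sum_i |(x,y_i|z)|^2.  Since
   (.,.|z) is a positive semi-definite Hermitian form, Cauchy-Schwarz gives
     (sum_i |(x,y_i|z)|^2)^2 <= ||x|z||^2 (u,u|z)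
        <= ||x|z||^2 sum_(i,j) |(x,y_i|z)| |(x,y_j|z)| |(y_i,y_j|z)|.
   Hoelder's inequality bounds the diagonal part of this double sum, and the
   off-diagonal part as well once |a_i a_j|^p <= (|a_i|^(2p) + |a_j|^(2p))/2
   has been summed over the n(n-1) pairs i <> j; a square root concludes. *)

Section PowR.
Variable R : realType.
Implicit Types a b p : R.

Lemma powRV a p : 0 <= a -> a^-1 `^ p = (a `^ p)^-1.
Proof. by move=> a0; rewrite -powR_inv1 // -powRrM mulN1r powRN. Qed.

Lemma powRK a p : 0 <= a -> p != 0 -> (a `^ p^-1) `^ p = a.
Proof. by move=> a0 p0; rewrite -powRrM mulVf // powRr1. Qed.

Lemma powR_sqr a p : 0 <= a -> (a ^+ 2) `^ p = a `^ (2 * p).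
Proof. by move=> a0; rewrite -powR_mulrn // -powRrM. Qed.

Lemma mul_powR_le_mean a b p : 0 <= a -> 0 <= b ->
  (a * b) `^ p <= (a `^ (2 * p) + b `^ (2 * p)) / 2.
Proof.
move=> a0 b0; rewrite powRM // (mulrC 2 p) !powRrM !powR_mulrn ?powR_ge0 //.
have := sqr_ge0 (a `^ p - b `^ p); lra.
Qed.

End PowR.

Section FiniteHoelder.
Variables (R : realType) (I : finType) (P : pred I).

Lemma psumr_powR_eq0 (u : I -> R) p : (forall i, 0 <= u i) ->
  \sum_(i | P i) u i `^ p = 0 -> forall i, P i -> u i = 0.
Proof.
move=> u0 /psumr_eq0P sum0 i Pi.
by apply: (@powR_eq0_eq0 _ _ p); apply: sum0 => // j _; exact: powR_ge0.
Qed.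

Lemma hoelder_sum (u v : I -> R) p q :
  0 < p -> 0 < q -> p^-1 + q^-1 = 1 ->
  (forall i, 0 <= u i) -> (forall i, 0 <= v i) ->
  \sum_(i | P i) u i * v i <=
  (\sum_(i | P i) u i `^ p) `^ p^-1 * (\sum_(i | P i) v i `^ q) `^ q^-1.
Proof.
move=> p0 q0 pq u0 v0.
set U := \sum_(i | P i) u i `^ p; set V := \sum_(i | P i) v i `^ q.
have sum_ge0 (w : I -> R) r : 0 <= \sum_(i | P i) w i `^ r.
  by apply: sumr_ge0 => i _; exact: powR_ge0.
have [U0|Un0] := eqVneq U 0.
  rewrite big1 ?mulr_ge0 ?powR_ge0 // => i Pi.
  by rewrite (psumr_powR_eq0 u0 U0 Pi) mul0r.
have [V0|Vn0] := eqVneq V 0.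
  rewrite big1 ?mulr_ge0 ?powR_ge0 // => i Pi.
  by rewrite (psumr_powR_eq0 v0 V0 Pi) mulr0.
have Ugt0 : 0 < U by rewrite lt0r Un0 sum_ge0.
have Vgt0 : 0 < V by rewrite lt0r Vn0 sum_ge0.
set a := U `^ p^-1; set b := V `^ q^-1.
have agt0 : 0 < a by exact: powR_gt0.
have bgt0 : 0 < b by exact: powR_gt0.
have ap : a `^ p = U by rewrite powRK ?gt_eqF // ltW.
have bq : b `^ q = V by rewrite powRK ?gt_eqF // ltW.
clearbody a b.
have young i : u i * v i <= a * b * (u i `^ p / U / p + v i `^ q / V / q).
  have -> : u i * v i = a * b * (u i / a * (v i / b)).
    by field; rewrite !gt_eqF.
  rewrite ler_pM2l ?mulr_gt0 //.
  have := conjugate_powR (divr_ge0 (u0 i) (ltW agt0))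
    (divr_ge0 (v0 i) (ltW bgt0)) p0 q0 pq.
  by rewrite !powRM ?invr_ge0 ?(ltW agt0) ?(ltW bgt0) //
    !powRV ?(ltW agt0) ?(ltW bgt0) // ap bq.
apply: le_trans (ler_sum _ (fun i _ => young i)) _.
rewrite -mulr_sumr big_split /= -!mulr_suml -/U -/V !divff ?gt_eqF //.
by rewrite !mul1r pq mulr1.
Qed.

End FiniteHoelder.


Lemma sumr_offdiag_const (V : nmodType) n (f : 'I_n -> V) :
  \sum_i \sum_(j | j != i) f i = (\sum_i f i) *+ n.-1.
Proof.
rewrite -sumrMnl; apply: eq_bigr => i _; rewrite sumr_const.
by have := cardC1 i; rewrite card_ord => <-.
Qed.

Lemma exchange_offdiag (V : nmodType) n (F : 'I_n -> 'I_n -> V) :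
  \sum_i \sum_(j | j != i) F i j = \sum_i \sum_(j | j != i) F j i.
Proof.
rewrite (exchange_big_dep xpredT) //=; apply: eq_bigr => i _.
by apply: eq_bigl => j; rewrite eq_sym.
Qed.

Lemma sum_offdiag_mul_powR_le (R : realType) n (a : 'I_n -> R) p :
  (forall i, 0 <= a i) ->
  \sum_i \sum_(j | j != i) (a i * a j) `^ p <= (\sum_i a i `^ (2 * p)) *+ n.-1.
Proof.
move=> a_ge0; apply: le_trans (ler_sum _ (fun i _ => ler_sum _ (fun j _ =>
  mul_powR_le_mean p (a_ge0 i) (a_ge0 j)))) _.
under eq_bigr do rewrite -mulr_suml big_split /=.
rewrite -mulr_suml big_split /= [X in _ + X]exchange_offdiag sumr_offdiag_const.
set s := _ *+ _; lra.
Qed.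

Section GramBound.
Variables (R : realType) (n : nat).
Variables (a : 'I_n -> R) (g : 'I_n -> 'I_n -> R) (p q : R).
Hypotheses (a_ge0 : forall i, 0 <= a i) (g_ge0 : forall i j, 0 <= g i j).
Hypotheses (p_gt1 : 1 < p) (pq : p^-1 + q^-1 = 1).

Local Notation Pa := (\sum_i a i `^ (2 * p)).

Let p_gt0 : 0 < p. Proof. exact: lt_trans p_gt1. Qed.

Let q_gt0 : 0 < q.
Proof. by rewrite -invr_gt0 -[q^-1](addKr p^-1) pq addrC subr_gt0 invf_lt1. Qed.

Lemma gram_diag_le :
  \sum_i a i ^+ 2 * g i i <= Pa `^ p^-1 * (\sum_i g i i `^ q) `^ q^-1.
Proof.
under [Pa]eq_bigr do rewrite -powR_sqr //.
exact (hoelder_sum (fun=> true) p_gt0 q_gt0 pq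
  (fun i => sqr_ge0 (a i)) (fun i => g_ge0 i i)).
Qed.

Lemma gram_offdiag_le :
  \sum_i \sum_(j | j != i) a i * a j * g i j <=
  ((n.-1)%:R * Pa) `^ p^-1 * (\sum_i \sum_(j | j != i) g i j `^ q) `^ q^-1.
Proof.
have mean := sum_offdiag_mul_powR_le p a_ge0; rewrite -mulr_natl in mean.
rewrite !pair_big_dep /= in mean *.
apply: le_trans (hoelder_sum (fun k : 'I_n * 'I_n => k.2 != k.1) p_gt0 q_gt0 pq
  (fun k => mulr_ge0 (a_ge0 k.1) (a_ge0 k.2)) (fun k => g_ge0 k.1 k.2)) _.
rewrite ler_wpM2r ?powR_ge0 // ge0_ler_powR ?invr_ge0 ?(ltW p_gt0) // nnegrE.
- by apply: sumr_ge0 => k _; exact: powR_ge0.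
- by rewrite mulr_ge0 ?sumr_ge0 // => i _; exact: powR_ge0.
Qed.

Local Notation B := ((\sum_i Num.sqrt (g i i) `^ (2 * q)) `^ q^-1
  + (n.-1)%:R `^ p^-1 * (\sum_i \sum_(j | j != i) g i j `^ q) `^ q^-1).

Lemma gram_le : \sum_i \sum_j a i * a j * g i j <= Pa `^ p^-1 * B.
Proof.
have split_diag : \sum_i \sum_j a i * a j * g i j =
    \sum_i a i ^+ 2 * g i i + \sum_i \sum_(j | j != i) a i * a j * g i j.
  by rewrite -big_split; apply: eq_bigr => i _; rewrite (bigD1 i) //= expr2.
rewrite split_diag mulrDr; apply: lerD.
  have -> : \sum_i Num.sqrt (g i i) `^ (2 * q) = \sum_i g i i `^ q.
    by apply: eq_bigr => i _; rewrite -powR_sqr ?sqrtr_ge0 // sqr_sqrtr.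
  exact: gram_diag_le.
rewrite mulrA -powRM ?ler0n ?sumr_ge0 // => [|i _]; last exact: powR_ge0.
by rewrite [Pa * _]mulrC; exact: gram_offdiag_le.
Qed.

Lemma gram_sum_sqr_le (A : R) : 0 <= A ->
  (\sum_i a i ^+ 2) ^+ 2 <= A * \sum_i \sum_j a i * a j * g i j ->
  \sum_i a i ^+ 2 <= Num.sqrt A * Pa `^ (2 * p)^-1 * B `^ 2^-1.
Proof.
move=> A_ge0 le_gram.
have Pa_ge0 : 0 <= Pa by apply: sumr_ge0 => i _; exact: powR_ge0.
have B_ge0 : 0 <= B by rewrite addr_ge0 ?mulr_ge0 ?powR_ge0.
have -> : Pa `^ (2 * p)^-1 = Num.sqrt (Pa `^ p^-1).
  by rewrite invfM (mulrC 2^-1) powRrM powR12_sqrt ?powR_ge0.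
rewrite powR12_sqrt // -!sqrtrM ?mulr_ge0 ?powR_ge0 //.
rewrite -[X in X <= _]ger0_norm ?sumr_ge0 // => [|i _]; last exact: sqr_ge0.
rewrite -sqrtr_sqr ler_sqrt ?mulr_ge0 ?powR_ge0 //.
by apply: le_trans le_gram _; rewrite -mulrA ler_wpM2l // gram_le.
Qed.

End GramBound.

Section HermitianForm.
Variables (K : numFieldType) (cj : {rmorphism K -> K}).
Hypotheses (cjK : involutive cj) (sqr_normJ : forall a, `|a| ^+ 2 = a * cj a).
Variables (X : lmodType K) (f : X -> X -> K).
Hypotheses (form_ge0 : forall x, 0 <= f x x)
  (formC : forall x y, f y x = cj (f x y))
  (formZl : forall a x y, f (a *: x) y = a * f x y)
  (formDl : forall x x' y, f (x + x') y = f x y + f x' y).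

Lemma normJ a : `|cj a| = `|a|.
Proof. by apply/eqP; rewrite -(eqrXn2 (n := 2)) // !sqr_normJ cjK mulrC. Qed.

Lemma formZr a x y : f x (a *: y) = cj a * f x y.
Proof. by rewrite formC formZl rmorphM -formC. Qed.

Lemma formDr x y y' : f x (y + y') = f x y + f x y'.
Proof. by rewrite formC formDl rmorphD -!formC. Qed.

Lemma form0l y : f 0 y = 0.
Proof. by rewrite -(scale0r 0) formZl mul0r. Qed.

Lemma form0r x : f x 0 = 0.
Proof. by rewrite formC form0l rmorph0. Qed.

Lemma form_suml (I : Type) (r : seq I) (P : pred I) (F : I -> X) y :
  f (\sum_(i <- r | P i) F i) y = \sum_(i <- r | P i) f (F i) y.
Proof. exact: (big_morph (f ^~ y) (fun u v => formDl u v y) (form0l y)). Qed.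

Lemma form_sumr (I : Type) (r : seq I) (P : pred I) x (F : I -> X) :
  f x (\sum_(i <- r | P i) F i) = \sum_(i <- r | P i) f x (F i).
Proof. exact: (big_morph (f x) (formDr x) (form0r x)). Qed.

Lemma form_lincomb2 a b x w :
  f (a *: x + b *: w) (a *: x + b *: w) =
  a * cj a * f x x + a * cj b * f x w + b * cj a * f w x + b * cj b * f w w.
Proof. by rewrite formDl !formDr !formZl !formZr; ring. Qed.

Lemma form_cauchy_schwarz x w : `|f x w| ^+ 2 <= f x x * f w w.
Proof.
set A := f x x; set C := f w w; set b := f x w.
have cjA : cj A = A by rewrite -formC.
have cjC : cj C = C by rewrite -formC.
(* If C = 0, the vector x - ((A + 1) / cj b) w would have a negative square;
   otherwise expand the square of C x - b w. *)
have [C0|C_neq0] := eqVneq C 0.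
  rewrite C0 mulr0; have [->|b_neq0] := eqVneq b 0.
    by rewrite normr0 expr0n.
  have := form_ge0 (1 *: x + (- (A + 1) / cj b) *: w).
  rewrite form_lincomb2 (formC x w) -/A -/b -/C C0.
  rewrite rmorph1 fmorph_div rmorphN rmorphD rmorph1 cjA cjK.
  have -> : 1 * 1 * A + 1 * (- (A + 1) / b) * b + - (A + 1) / cj b * 1 * cj b
      + - (A + 1) / cj b * (- (A + 1) / b) * 0 = - (A + 2).
    by field; rewrite b_neq0 fmorph_eq0 b_neq0.
  have A2_gt0 : 0 < A + 2 by rewrite ltr_wpDl ?form_ge0.
  by rewrite oppr_ge0 => /(lt_le_trans A2_gt0); rewrite ltxx.
have := form_ge0 (C *: x + (- b) *: w).
rewrite form_lincomb2 (formC x w) -/A -/b -/C cjC rmorphN.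
have -> : C * C * A + C * - cj b * b + - b * C * cj b + - b * - cj b * C
    = C * (A * C - `|b| ^+ 2) by rewrite sqr_normJ; ring.
by rewrite pmulr_rge0 ?subr_ge0 // lt0r C_neq0 form_ge0.
Qed.

Lemma form_sum_sqr_norm_le n x (y : 'I_n -> X) :
  (\sum_i `|f x (y i)| ^+ 2) ^+ 2 <=
  f x x * \sum_i \sum_j `|f x (y i)| * `|f x (y j)| * `|f (y i) (y j)|.
Proof.
set u := \sum_i f x (y i) *: y i.
have fxu : f x u = \sum_i `|f x (y i)| ^+ 2.
  by rewrite form_sumr; apply: eq_bigr => i _; rewrite formZr sqr_normJ mulrC.
have fuu : f u u <= \sum_i \sum_j `|f x (y i)| * `|f x (y j)| * `|f (y i) (y j)|.
  rewrite -[f u u]ger0_norm // form_suml; apply: le_trans (ler_norm_sum _ _ _) _.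
  apply: ler_sum => i _; rewrite formZl form_sumr normrM.
  apply: le_trans (ler_wpM2l (normr_ge0 _) (ler_norm_sum _ _ _)) _.
  by rewrite mulr_sumr; apply: ler_sum => j _; rewrite formZr !normrM normJ mulrA.
have := form_cauchy_schwarz x u.
rewrite fxu ger0_norm ?sumr_ge0 // => [le_xu|i _].
  exact: le_trans le_xu (ler_wpM2l (form_ge0 x) fuu).
by rewrite exprn_ge0.
Qed.

End HermitianForm.

(* In the intended instances K is R or C; [phi a] is the norm of [a] as a
   real number. *)
Section TwoInnerProduct.
Variables (R : realType) (K : numFieldType).
Variables (cj : {rmorphism K -> K}) (iota : {rmorphism R -> K}) (phi : K -> R).
Hypotheses (cjK : involutive cj) (sqr_normJ : forall a, `|a| ^+ 2 = a * cj a).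
Hypotheses (ler_iota : {mono iota : r s / r <= s}).
Hypothesis normE : forall a, `|a| = iota (phi a).

Lemma phi_ge0 a : 0 <= phi a.
Proof. by rewrite -ler_iota rmorph0 -normE. Qed.

Lemma two_inner_product_ineq (X : lmodType K) (ip : X -> X -> X -> K)
    n x (y : 'I_n -> X) z p q :
  is_2inner_product cj ip -> 1 < p -> p^-1 + q^-1 = 1 ->
  ineq_2ip phi ip x y z p q.
Proof.
case=> _ [ip_ge0 [_ [_ [ipC [ipZ ipD]]]]] p_gt1 pq.
apply: (gram_sum_sqr_le (a := fun i => phi (ip x (y i) z))
  (g := fun i j => phi (ip (y i) (y j) z)) _ _ p_gt1 pq (phi_ge0 _)) => [i|i j|].
- exact: phi_ge0.
- exact: phi_ge0.
rewrite -ler_iota rmorphXn rmorphM -normE ger0_norm // !rmorph_sum.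
under eq_bigr do rewrite rmorphXn -normE.
under [X in _ <= _ * X]eq_bigr => i _.
  rewrite rmorph_sum; under eq_bigr do rewrite !rmorphM -!normE.
  over.
exact: (form_sum_sqr_norm_le cjK sqr_normJ (ip_ge0 ^~ z)
  (fun u v => ipC u v z) (fun a u v => ipZ a u v z) (fun u u' v => ipD u u' v z)).
Qed.

End TwoInnerProduct.

Theorem mainTheorem2 (R : realType) :
  (forall (X : lmodType R) (ip : X -> X -> X -> R),
     is_2inner_product id ip ->
     forall (n : nat) (x : X) (y : 'I_n -> X) (z : X) (p q : R),
       (0 < n)%N -> 1 < p -> p^-1 + q^-1 = 1 ->
       ineq_2ip (fun a : R => `|a|) ip x y z p q) /\
  (forall (X : lmodType R[i]) (ip : X -> X -> X -> R[i]),
     is_2inner_product (@conjc R) ip ->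
     forall (n : nat) (x : X) (y : 'I_n -> X) (z : X) (p q : R),
       (0 < n)%N -> 1 < p -> p^-1 + q^-1 = 1 ->
       ineq_2ip (fun a : R[i] => complex.Re `|a|) ip x y z p q).
Proof.
split=> X ip ip2 n x y z p q _.
- apply: (two_inner_product_ineq (cj := idfun) (iota := idfun)) ip2 => // a.
  by rewrite real_normK ?num_real.
- apply: (two_inner_product_ineq (cj := conjc) (iota := real_complex R)) ip2.
  + exact: conjcK.
  + exact: sqr_normc.
  + exact: lecR.
  + by move=> a; rewrite normc_def.
Qed.
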